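(* Let $|\zeta\rangle$ be an $n$-qubit pure state and $\rho$ an $n$-qubit state. Let $x,z$ be the measurement outcomes of the state-based classical shadow procedure run on input $\rho$ with auxiliary state $|\zeta\rangle$. Then for all $x,z\in\{0,1\}^n$, $$\Pr[x,z\mid\zeta]=\frac{1}{2^n}\langle\zeta^*_{x,z}|\rho|\zeta^*_{x,z}\rangle.$$
   Context: State-based classical shadow procedure: registers $R_1,R_2$ of $n$ qubits; $R_1$ holds $\rho$, $R_2$ holds $|\zeta\rangle$; apply $n$ CNOT gates qubit by qubit with $R_1$ qubits as controls and $R_2$ qubits as targets, then $H^{\otimes n}$ on $R_1$, then measure $R_1$ and $R_2$ in the computational basis obtaining $z$ and $x$ respectively. $|\zeta_{x,z}\rangle=X^xZ^z|\zeta\rangle$ with $X^x=\bigotimes_jX^{x_j}$, $Z^z=\bigotimes_jZ^{z_j}$, and $|\zeta^*_{x,z}\rangle$ is its entrywise complex conjugate in the computational basis. *)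

From HB Require Import structures.
From mathcomp Require Import all_boot all_order all_algebra.
Set Implicit Arguments. Unset Strict Implicit. Unset Printing Implicit Defensive.
Import Order.TTheory GRing.Theory Num.Theory.
Local Open Scope ring_scope.

Section Defs.
Variable C : numClosedFieldType.

(* computational basis labels of n qubits *)
Definition bits (n : nat) := {ffun 'I_n -> bool}.

(* vectors and operators on the Hilbert space spanned by |t>, t : T *)
Definition vec (T : finType) := T -> C.
Definition op (T : finType) := T -> T -> C.

Definition idop (T : finType) : op T := fun i j => (i == j)%:R.
Definition mulop (T : finType) (A B : op T) : op T :=
  fun i k => \sum_j A i j * B j k.
Definition adjop (T : finType) (A : op T) : op T := fun i j => (A j i)^*.
(* apply a list of gates, the head of the list being applied first *)
Definition circuit (T : finType) (gs : seq (op T)) : op T :=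
  foldl (fun acc g => mulop g acc) (@idop T) gs.
Definition applyop (T : finType) (A : op T) (v : vec T) : vec T :=
  fun i => \sum_j A i j * v j.
Definition expect (T : finType) (v : vec T) (A : op T) : C :=
  \sum_i \sum_j (v i)^* * A i j * v j.
Definition conjvec (T : finType) (v : vec T) : vec T := fun i => (v i)^*.

Definition is_pure_state (T : finType) (v : vec T) : Prop :=
  \sum_i (v i)^* * v i = 1.
Definition is_density (T : finType) (rho : op T) : Prop :=
  (forall v : vec T, 0 <= expect v rho) /\ \sum_i rho i i = 1.

Variable n : nat.
Local Notation B := (bits n).
(* joint basis of R1 (first component) and R2 (second component) *)
Local Notation J := (B * B)%type.

Definition xorb_bits (a b : B) : B := [ffun k => xorb (a k) (b k)].
Definition dotb (a b : B) : nat := #|[set k | a k && b k]|.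

(* CNOT with control qubit j of R1 and target qubit j of R2 *)
Definition cnot_gate (j : 'I_n) : op J := fun o i =>
  ((o.1 == i.1) &&
   (o.2 == [ffun k => if k == j then xorb (i.2 k) (i.1 j) else i.2 k]))%:R.

(* Hadamard on qubit j of R1 *)
Definition hadamard_gate (j : 'I_n) : op J := fun o i =>
  ((o.2 == i.2) && [forall k, (k != j) ==> (o.1 k == i.1 k)])%:R *
  ((-1) ^+ (o.1 j && i.1 j) / sqrtC 2).

Definition shadow_circuit : op J :=
  circuit ([seq cnot_gate j | j <- enum 'I_n] ++
           [seq hadamard_gate j | j <- enum 'I_n]).

Definition joint_input (rho : op B) (zeta : vec B) : op J := fun o i =>
  rho o.1 i.1 * (zeta o.2 * (zeta i.2)^*).

(* Pr[x, z | zeta]: R1 measured as z, R2 measured as x *)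
Definition shadow_prob (rho : op B) (zeta : vec B) (x z : B) : C :=
  let U := shadow_circuit in
  mulop (mulop U (joint_input rho zeta)) (adjop U) (z, x) (z, x).

(* Pauli operators X^x = (x)_j X^{x_j} and Z^z = (x)_j Z^{z_j} *)
Definition Xpow (x : B) : op B := fun o i => (o == xorb_bits i x)%:R.
Definition Zpow (z : B) : op B := fun o i => (o == i)%:R * (-1) ^+ dotb z i.

Definition zeta_xz (zeta : vec B) (x z : B) : vec B :=
  applyop (Xpow x) (applyop (Zpow z) zeta).

End Defs.

(* The CNOT cascade maps |a>|b> to |a>|b xor a> and H^{\otimes n}
   sends |a> to 2^{-n/2} \sum_z (-1)^{z.a} |z>, so the amplitude of the outcome
   (z, x) on |a>|b> is 2^{-n/2} (-1)^{z.a} [b = a xor x].  Summing over the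
   input density rho (x) |zeta><zeta| gives
   2^{-n} \sum_{a,a'} (-1)^{z.a + z.a'} rho_{a a'} zeta(a+x) zeta(a'+x)^*,
   and since (-1)^{z.(a+x)} (-1)^{z.(a'+x)} = (-1)^{z.a} (-1)^{z.a'} this is
   2^{-n} <zeta^*_{x,z}| rho |zeta^*_{x,z}>. *)

From mathcomp Require Import all_boot all_algebra.
From mathcomp Require Import ring.
From Stdlib Require Import FunctionalExtensionality.
Set Implicit Arguments. Unset Strict Implicit. Unset Printing Implicit Defensive.
Import GRing.Theory Num.Theory.
Local Open Scope ring_scope.

Section Operators.
Variables (C : numClosedFieldType) (T : finType).

Lemma sum_delta_l (a : T) (F : T -> C) : \sum_m (m == a)%:R * F m = F a.
Proof.
rewrite (bigD1 a) //= eqxx mul1r big1 ?addr0 // => m /negbTE ->.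
by rewrite mul0r.
Qed.

Lemma sum_delta_r (a : T) (F : T -> C) : \sum_m F m * (m == a)%:R = F a.
Proof. by under eq_bigr do rewrite mulrC; rewrite sum_delta_l. Qed.

Lemma mulopA (A B D : op C T) : mulop A (mulop B D) = mulop (mulop A B) D.
Proof.
do 2!apply: functional_extensionality => ?; rewrite /mulop.
under eq_bigr do rewrite big_distrr /=.
rewrite exchange_big /=; apply: eq_bigr => k _; rewrite big_distrl /=.
by apply: eq_bigr => l _; rewrite mulrA.
Qed.

Lemma mulop1 (A : op C T) : mulop A (@idop C T) = A.
Proof.
by do 2!apply: functional_extensionality => ?; rewrite /mulop sum_delta_r.
Qed.

Lemma mul1op (A : op C T) : mulop (@idop C T) A = A.
Proof.
do 2!apply: functional_extensionality => ?; rewrite /mulop /idop.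
by under eq_bigr do rewrite eq_sym; rewrite sum_delta_l.
Qed.

Lemma foldl_mulop (gs : seq (op C T)) (A : op C T) :
  foldl (fun acc g => mulop g acc) A gs = mulop (circuit gs) A.
Proof.
elim: gs A => [|g gs IH] A /=; first by rewrite mul1op.
by rewrite /circuit /= !IH mulop1 mulopA.
Qed.

Lemma circuit_cat (s1 s2 : seq (op C T)) :
  circuit (s1 ++ s2) = mulop (circuit s2) (circuit s1).
Proof. by rewrite /circuit foldl_cat foldl_mulop. Qed.

Lemma circuit_rcons (s : seq (op C T)) (g : op C T) :
  circuit (rcons s g) = mulop g (circuit s).
Proof. by rewrite /circuit foldl_rcons. Qed.

End Operators.

Section Bits.
Variable n : nat.
Implicit Types (a b c : bits n).

Lemma xorb_bitsC a b : xorb_bits a b = xorb_bits b a.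
Proof. by apply/ffunP => k; rewrite !ffunE; case: (a k); case: (b k). Qed.

Lemma eq_xorb_bits a b c : (c == xorb_bits a b) = (a == xorb_bits c b).
Proof.
by apply/eqP/eqP => ->; apply/ffunP => k; rewrite !ffunE;
  case: (a k); case: (b k); case: (c k).
Qed.

Definition flip_bit (j : 'I_n) a : bits n :=
  [ffun k => if k == j then ~~ a k else a k].

Lemma flip_bit_neq j a : flip_bit j a != a.
Proof.
apply/negP => /eqP /ffunP /(_ j); rewrite ffunE eqxx.
by case: (a j).
Qed.

Lemma eq_off_bit j a b :
  [forall k, (k != j) ==> (a k == b k)] -> (b == a) || (b == flip_bit j a).
Proof.
move=> /forallP eq_ab; apply/orP.
have eq_off k : k != j -> b k = a k.
  by move=> kj; apply/esym/eqP; move/implyP: (eq_ab k); apply.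
have [eq_j | neq_j] := eqVneq (b j) (a j); [left | right];
  apply/eqP/ffunP => k; rewrite ?ffunE; have [->|/eq_off -> //] := eqVneq k j.
  by rewrite eq_j.
by move: neq_j; case: (b j); case: (a j).
Qed.

End Bits.

Section Signs.
Variables (C : numClosedFieldType) (n : nat).
Implicit Types (a b x z : bits n).

Definition parity_sign z a : C := \prod_k (-1) ^+ (z k && a k).

Lemma expr_dotb z a : (-1) ^+ dotb z a = parity_sign z a.
Proof.
rewrite /dotb -prodr_const /parity_sign big_mkcond /=.
by apply: eq_bigr => k _; rewrite inE; case: (z k && a k).
Qed.

Lemma conj_parity_sign z a : (parity_sign z a)^* = parity_sign z a.
Proof.
by rewrite rmorph_prod; apply: eq_bigr => k _; rewrite rmorphXn rmorphN1.
Qed.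

Lemma parity_signM_xorb z a b x :
  parity_sign z (xorb_bits a x) * parity_sign z (xorb_bits b x) =
  parity_sign z a * parity_sign z b.
Proof.
rewrite /parity_sign -!big_split /=; apply: eq_bigr => k _; rewrite !ffunE.
by case: (z k); case: (a k); case: (b k); case: (x k) => /=; ring.
Qed.

Definition hadamard_amp z a : C := parity_sign z a / sqrtC 2 ^+ n.

Lemma hadamard_amp_mul_conj z a b :
  hadamard_amp z a * (hadamard_amp z b)^* =
  (2 ^+ n)^-1 * (parity_sign z a * parity_sign z b).
Proof.
have conj_sqrt2 : (sqrtC 2 : C)^* = sqrtC 2.
  by apply/conj_Creal/sqrtC_real; rewrite ler0n.
rewrite /hadamard_amp rmorphM /= conj_parity_sign fmorphV rmorphXn /= conj_sqrt2.
have -> : (2 ^+ n : C) = sqrtC 2 ^+ n * sqrtC 2 ^+ n by rewrite -exprMn -expr2 sqrtCK.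
by rewrite invfM; ring.
Qed.

End Signs.

Section Circuit.
Variables (C : numClosedFieldType) (n : nat).
Local Notation J := (bits n * bits n)%type.

Definition cnot_cascade (s : seq 'I_n) (i : J) : J :=
  (i.1, [ffun k => xorb (i.2 k) (odd (count_mem k s) && i.1 k)]).

Lemma circuit_cnot (s : seq 'I_n) (o i : J) :
  circuit [seq cnot_gate C j | j <- s] o i = (o == cnot_cascade s i)%:R.
Proof.
elim/last_ind: s o i => [|s j IH] o i.
  congr (_ %:R); congr (_ == _); case: i => a b.
  by congr pair; apply/ffunP => k; rewrite ffunE; case: (b k).
rewrite map_rcons circuit_rcons /mulop.
under eq_bigr do rewrite IH.
rewrite sum_delta_r /cnot_gate; congr (_ %:R).
case: o => o1 o2; rewrite xpair_eqE; congr (_ && (_ == _)).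
apply/ffunP => k; rewrite !ffunE -cats1 count_cat /= addn0 oddD.
have [->|kj] := eqVneq k j; rewrite /= ?eqxx /=.
  by case: (i.2 j); case: (i.1 j); case: (odd _).
by case: (odd _).
Qed.

Lemma sum_hadamard_gate (j : 'I_n) (o : J) (G : J -> C) :
  \sum_m hadamard_gate C j o m * G m =
  (-1) ^+ (o.1 j) / sqrtC 2 * G o + 1 / sqrtC 2 * G (flip_bit j o.1, o.2).
Proof.
set o' := (flip_bit j o.1, o.2).
have o'_neq : o' != o by apply: contra (flip_bit_neq j o.1) => /eqP/(congr1 fst)/eqP.
rewrite (bigD1 o) // (bigD1 o') /=; last by rewrite o'_neq.
rewrite big1 ?addr0; last first.
  move=> [m1 m2] /andP [m_neq m_neq'].
  rewrite /hadamard_gate /=; case: eqP => [e2 | _]; last by rewrite !mul0r.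
  case: forallP => [/forallP /eq_off_bit /orP eq1 | _]; last by rewrite !mul0r.
  by case: eq1 => /eqP e1; [move: m_neq | move: m_neq'];
    rewrite e1 -e2 -?surjective_pairing eqxx.
have eq_off_o : [forall k, (k != j) ==> (o.1 k == o.1 k)].
  by apply/forallP => k; rewrite eqxx implybT.
have eq_off_o' : [forall k, (k != j) ==> (o.1 k == flip_bit j o.1 k)].
  by apply/forallP => k; apply/implyP => kj; rewrite ffunE (negbTE kj).
by rewrite /hadamard_gate /= !eqxx eq_off_o eq_off_o' ffunE eqxx !andbb andbN /= !mul1r.
Qed.

Definition hadamard_layer (s : seq 'I_n) : op C J := fun o i =>
  ((o.2 == i.2) && [forall k, (k \notin s) ==> (o.1 k == i.1 k)])%:R *
  \prod_(k <- s) ((-1) ^+ (o.1 k && i.1 k) / sqrtC 2).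

Lemma forall_notin_rcons (s : seq 'I_n) (j : 'I_n) (a b : bits n) :
  j \notin s ->
  [forall k, (k \notin s) ==> (a k == b k)] =
  [forall k, (k \notin rcons s j) ==> (a k == b k)] && (a j == b j).
Proof.
move=> js; apply/forallP/andP => [eq_ab | [/forallP eq_ab eq_j] k].
  split; last by move/implyP: (eq_ab j); apply.
  apply/forallP => k; apply/implyP; rewrite mem_rcons in_cons negb_or => /andP[_].
  exact/implyP.
apply/implyP => ks; have [->//|kj] := eqVneq k j.
by move/implyP: (eq_ab k); apply; rewrite mem_rcons in_cons negb_or kj.
Qed.

Lemma circuit_hadamard (s : seq 'I_n) (o i : J) : uniq s ->
  circuit [seq hadamard_gate C j | j <- s] o i = hadamard_layer s o i.
Proof.
elim/last_ind: s o i => [|s j IH] o i.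
  move=> _; rewrite /circuit /idop /hadamard_layer big_nil mulr1; congr (_ %:R).
  case: o i => [o1 o2] [i1 i2]; rewrite xpair_eqE andbC /=; congr (_ && _).
  by apply/eqP/forallP => [->//|eq_oi]; apply/ffunP => k; exact/eqP/eq_oi.
rewrite rcons_uniq => /andP [js us].
rewrite map_rcons circuit_rcons /mulop.
under eq_bigr do rewrite IH //.
rewrite sum_hadamard_gate /hadamard_layer /=.
rewrite !(forall_notin_rcons _ _ js) ffunE eqxx.
have -> : [forall k, (k \notin rcons s j) ==> (flip_bit j o.1 k == i.1 k)] =
          [forall k, (k \notin rcons s j) ==> (o.1 k == i.1 k)].
  apply: eq_forallb => k; rewrite ffunE mem_rcons in_cons negb_or.
  by have [->|//] := eqVneq k j.
have -> : \prod_(k <- s) ((-1) ^+ (flip_bit j o.1 k && i.1 k) / sqrtC 2) =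
          \prod_(k <- s) ((-1) ^+ (o.1 k && i.1 k) / sqrtC 2) :> C.
  apply: eq_big_seq => k ks; rewrite ffunE.
  by have [kj|//] := eqVneq k j; move: js; rewrite -kj ks.
rewrite big_rcons /=.
by case: (o.2 == i.2); case: [forall _, _]; case: (o.1 j); case: (i.1 j) => /=; ring.
Qed.

Lemma shadow_circuit_entry (o i : J) :
  shadow_circuit C o i = (o.2 == xorb_bits i.2 i.1)%:R * hadamard_amp C o.1 i.1.
Proof.
rewrite /shadow_circuit circuit_cat /mulop.
under eq_bigr do rewrite circuit_cnot.
rewrite sum_delta_r circuit_hadamard ?enum_uniq // /hadamard_layer /=.
have -> : [forall k, (k \notin enum 'I_n) ==> (o.1 k == i.1 k)].
  by apply/forallP => k; rewrite mem_enum.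
rewrite andbT big_enum /= big_split /= prodr_const card_ord exprVn.
congr (_ %:R * (_ / _)).
by congr (_ == _); apply/ffunP => k; rewrite !ffunE count_uniq_mem ?enum_uniq ?mem_enum.
Qed.

Lemma sum_xorb_delta (x : bits n) (F : J -> C) :
  \sum_i (x == xorb_bits i.2 i.1)%:R * F i = \sum_a F (a, xorb_bits a x).
Proof.
transitivity (\sum_a \sum_b (x == xorb_bits b a)%:R * F (a, b)).
  by rewrite pair_bigA; apply: eq_bigr => -[].
apply: eq_bigr => a _.
by under eq_bigr do rewrite eq_xorb_bits xorb_bitsC; rewrite sum_delta_l.
Qed.

Lemma shadow_prob_expand (rho : op C (bits n)) (zeta : vec C (bits n)) (x z : bits n) :
  shadow_prob rho zeta x z =
  \sum_a \sum_b hadamard_amp C z a * (hadamard_amp C z b)^* *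
    (rho a b * (zeta (xorb_bits a x) * (zeta (xorb_bits b x))^*)).
Proof.
rewrite /shadow_prob /mulop /adjop [RHS]exchange_big /=.
under eq_bigr do rewrite shadow_circuit_entry rmorphM /= conjC_nat mulrCA.
rewrite sum_xorb_delta; apply: eq_bigr => b _.
under eq_bigr do rewrite shadow_circuit_entry -mulrA.
rewrite sum_xorb_delta big_distrl /=; apply: eq_bigr => a _.
by rewrite /joint_input /=; ring.
Qed.

Lemma zeta_xzE (zeta : vec C (bits n)) (x z i : bits n) :
  zeta_xz zeta x z i = parity_sign C z (xorb_bits i x) * zeta (xorb_bits i x).
Proof.
rewrite /zeta_xz /applyop /Xpow /Zpow -expr_dotb.
under eq_bigr do rewrite eq_xorb_bits.
rewrite sum_delta_l.
by under eq_bigr do rewrite -mulrA eq_sym; rewrite sum_delta_l.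
Qed.

Lemma expect_conj_zeta_xz (rho : op C (bits n)) (zeta : vec C (bits n)) (x z : bits n) :
  expect (conjvec (zeta_xz zeta x z)) rho =
  \sum_a \sum_b parity_sign C z a * parity_sign C z b *
    (rho a b * (zeta (xorb_bits a x) * (zeta (xorb_bits b x))^*)).
Proof.
rewrite /expect /conjvec; apply: eq_bigr => a _; apply: eq_bigr => b _.
rewrite conjCK !zeta_xzE rmorphM /= conj_parity_sign -(parity_signM_xorb C z a b x).
by ring.
Qed.

End Circuit.

(* The identity is algebraic: it holds for every [rho] and [zeta]. *)
Theorem proposition4 (C : numClosedFieldType) (n : nat)
    (rho : op C (bits n)) (zeta : vec C (bits n)) :
  is_density rho -> is_pure_state zeta ->
  forall x z : bits n,
    shadow_prob rho zeta x z =
    (2 ^+ n)^-1 * expect (conjvec (zeta_xz zeta x z)) rho.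
Proof.
move=> _ _ x z.
rewrite shadow_prob_expand expect_conj_zeta_xz big_distrr /=.
apply: eq_bigr => a _; rewrite big_distrr /=; apply: eq_bigr => b _.
by rewrite hadamard_amp_mul_conj [RHS]mulrA.
Qed.
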